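(* Let $F$ be a field, $n\ge 2$, and let $r_1,\ldots,r_m$ be strictly upper triangular matrix units in $M_n(F)$ (i.e. each $r_l=e_{i_lj_l}$ with $i_l<j_l$) such that the associative product $r_1r_2\cdots r_m\neq 0$. Then for $\sigma\in\mathcal{S}_m$: (i) $r_{\sigma^{-1}(1)}r_{\sigma^{-1}(2)}\cdots r_{\sigma^{-1}(m)}\neq 0$ if and only if $\sigma$ is the identity; (ii) the left-normed commutator $[r_{\sigma^{-1}(1)},r_{\sigma^{-1}(2)},\ldots,r_{\sigma^{-1}(m)}]\neq 0$ if and only if $\sigma\in\mathscr{T}_m$.
   Context: $e_{ij}$ denotes the matrix unit with $1$ in position $(i,j)$ and $0$ elsewhere. Left-normed commutators: $[x_1,x_2]=x_1x_2-x_2x_1$ and $[x_1,\ldots,x_k]=[[x_1,\ldots,x_{k-1}],x_k]$ for $k>2$. $\mathcal{S}_m$ is the group of bijections of $I_m=\{1,\ldots,m\}$, with $\sigma\circ\tau$ meaning apply $\tau$ first. $\mathscr{T}_m=\{\sigma\in\mathcal{S}_m \mid \exists t\in I_m:\ \sigma(1)>\sigma(2)>\cdots>\sigma(t)=1,\ \sigma(t)<\sigma(t+1)<\cdots<\sigma(m)\}$. *)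

From HB Require Import structures.
From mathcomp Require Import all_boot all_order all_algebra all_fingroup.
Set Implicit Arguments. Unset Strict Implicit. Unset Printing Implicit Defensive.
Import GRing.Theory.
Local Open Scope ring_scope.

(* Matrix commutator [A,B] = AB - BA (using the general matrix product *m,
   so no ring structure on 'M_n is needed). *)
Definition mcomm (F : fieldType) (n : nat) (A B : 'M[F]_n) : 'M[F]_n :=
  A *m B - B *m A.

Definition mxprod (F : fieldType) (n : nat) (s : seq 'M[F]_n) : 'M[F]_n :=
  foldr (fun A B => A *m B) 1%:M s.

(* Left-normed commutator [x_1, ..., x_k] = [[x_1,...,x_{k-1}],x_k];
   for a single element it is x_1 itself (the empty list gives 0, never used). *)
Definition lcomm (F : fieldType) (n : nat) (s : seq 'M[F]_n) : 'M[F]_n :=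
  match s with
  | [::] => 0
  | x :: s' => foldl (@mcomm F n) x s'
  end.

(* The set T_m, with I_m = {0,...,m-1} (0-based): sigma is in T_m iff there is
   t with sigma(0) > sigma(1) > ... > sigma(t) = 0 and
   sigma(t) < sigma(t+1) < ... < sigma(m-1). *)
Definition inTm (m : nat) (s : 'S_m) : Prop :=
  exists t : 'I_m,
    nat_of_ord (s t) = 0%N /\
    (forall a b : 'I_m, (a < b)%N -> (b <= t)%N -> (s b < s a)%N) /\
    (forall a b : 'I_m, (t <= a)%N -> (a < b)%N -> (s a < s b)%N).

From HB Require Import structures.
From mathcomp Require Import all_boot all_order all_algebra all_fingroup zify.
Set Implicit Arguments. Unset Strict Implicit. Unset Printing Implicit Defensive.
Import GRing.Theory.

(* Write r_l = e_(I l, J l).  Since e_ij e_kl = [j = k] e_il, the nonzero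
   product r_1 ... r_m forces J l = I (l+1), and I l < J l then makes
   I 1 < ... < I m < J m, so J u = I v exactly when v = u + 1.  A reordered
   product is thus nonzero iff consecutive factors carry consecutive labels,
   which for a permutation of all labels means the identity.  For the
   commutator, [c e_(I lo, J hi), r_x] is c e_(I lo, J x) if x = hi + 1,
   -c e_(I x, J hi) if x + 1 = lo, and 0 otherwise: the left-normed commutator
   survives iff every new label is adjacent to the interval of labels used so
   far, i.e. iff all prefixes of the one-line notation of sigma^-1 are
   intervals.  This says that sigma never takes at y a value above both its
   values at x < y < z, the usual description of the valley-shaped
   permutations T_m. *)

Definition convex_seq (s : seq nat) : Prop :=
  forall x y z, x < y < z -> x \in s -> z \in s -> y \in s.

Lemma convex_index_iota lo hi : convex_seq (index_iota lo hi).
Proof. by move=> x y z; rewrite !mem_index_iota; lia. Qed.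

Lemma eq_convex_seq s1 s2 : s1 =i s2 -> convex_seq s1 <-> convex_seq s2.
Proof.
move=> eq12; split=> cvx x y z xyz; [rewrite -!eq12 | rewrite !eq12]; exact: cvx.
Qed.

Fixpoint extends_interval (lo hi : nat) (s : seq nat) : bool :=
  if s is x :: s' then
    if hi.+1 == x then extends_interval lo x s'
    else if x.+1 == lo then extends_interval x hi s'
    else false
  else true.

Lemma extends_intervalP lo hi s :
  lo <= hi -> uniq s -> {in s, forall x, (x < lo) || (hi < x)} ->
  reflect (forall k, convex_seq (index_iota lo hi.+1 ++ take k s))
          (extends_interval lo hi s).
Proof.
elim: s lo hi => [|x s IH] lo hi /= lohi.
  by move=> _ _; apply: ReflectT => k; rewrite cats0; apply: convex_index_iota.
case/andP=> xs us out; have xout := out x (mem_head x s).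
have outs y : y \in s -> [&& (y < lo) || (hi < y) & y != x].
  by move=> ys; rewrite out ?inE ?ys ?orbT //=; apply: contraNneq xs => <-.
have step lo' hi' : lo' <= hi' -> {in s, forall y, (y < lo') || (hi' < y)} ->
    (forall k, index_iota lo hi.+1 ++ take k.+1 (x :: s) =i index_iota lo' hi'.+1 ++ take k s) ->
    reflect (forall k, convex_seq (index_iota lo hi.+1 ++ take k (x :: s)))
            (extends_interval lo' hi' s).
  move=> lohi' out' mem; apply: (iffP (IH _ _ lohi' us out')) => [cvx [|k]|cvx k].
  - by rewrite take0 cats0; apply: convex_index_iota.
  - exact/(eq_convex_seq (mem k)).
  - exact/(eq_convex_seq (mem k)).
case: ifP => [/eqP hix|/negbT hix]; last case: ifP => [/eqP xlo|/negbT xlo].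
- apply: step => [||k y]; [lia | by move=> y /outs; lia |].
  by rewrite /= !mem_cat in_cons !mem_index_iota; case: (y \in _); lia.
- apply: step => [||k y]; [lia | by move=> y /outs; lia |].
  by rewrite /= !mem_cat in_cons !mem_index_iota; case: (y \in _); lia.
apply: ReflectF => /(_ 1%N); rewrite /= take0.
have [xl|hx] : x.+1 < lo \/ hi.+1 < x by lia.
  by move/(_ x x.+1 lo); rewrite !mem_cat !inE !mem_index_iota; lia.
by move/(_ hi hi.+1 x); rewrite !mem_cat !inE !mem_index_iota; lia.
Qed.

Lemma path_succ_iota u s :
  path (fun i j => i.+1 == j) u s = (s == iota u.+1 (size s)).
Proof.
by elim: s u => [|x s IH] u //=; rewrite IH eqseq_cons [x == _]eq_sym; case: eqP => // <-.
Qed.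

Definition peak_free m (s : 'S_m) : Prop :=
  forall x y z : 'I_m, x < y -> y < z -> s y < s x \/ s y < s z.

Section OneLineNotation.
Variables (N : nat) (p : 'S_N).

Lemma mem_take_perm (i : 'I_N) k :
  (val (p i) \in take k [seq val (p j) | j <- enum 'I_N]) = (i < k).
Proof.
rewrite in_take ?(index_map (f := fun j => val (p j))) ?index_enum_ord //.
  exact: inj_comp val_inj (@perm_inj _ p).
by apply: map_f; rewrite mem_enum.
Qed.

Lemma perm_path_succ u s :
  [seq val (p i) | i <- enum 'I_N] = u :: s ->
  path (fun i j => i.+1 == j) u s = (p == 1%g).
Proof.
move=> Ep; have sizeN : (size s).+1 = N.
  by rewrite -(size_enum_ord N) -(size_map (fun i => val (p i))) Ep.
have iota0 : [seq val (p i) | i <- enum 'I_N] = iota 0 N -> p = 1%g.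
  move=> /esym; rewrite -val_enum_ord => /eq_in_map p1.
  by apply/permP => i; apply: val_inj; rewrite perm1 (p1 i) ?mem_enum.
rewrite path_succ_iota; apply/eqP/eqP => [s_iota|].
  have N_gt0 : 0 < N by rewrite -sizeN.
  have : val (p ((p^-1)%g (Ordinal N_gt0))) \in u :: s.
    by rewrite -Ep (map_f (fun i => val (p i))) ?mem_enum.
  rewrite permKV s_iota inE mem_iota /= => /orP[/eqP u0|]; last by lia.
  by apply: iota0; rewrite Ep s_iota -u0 -sizeN.
move=> p1; have : iota 0 N = u :: s.
  by rewrite -Ep -val_enum_ord; apply: eq_map => i; rewrite p1 perm1.
by rewrite -sizeN => -[<- s_iota]; rewrite s_iota.
Qed.

Lemma perm_convex_take :
  (forall k, convex_seq (take k [seq val (p i) | i <- enum 'I_N])) <-> peak_free (p^-1)%g.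
Proof.
split=> [cvx x y z xy yz | pf k x y z xyz].
  pose k := (maxn ((p^-1)%g x) ((p^-1)%g z)).+1.
  have mem_k (w : 'I_N) :
      (val w \in take k [seq val (p i) | i <- enum 'I_N]) = ((p^-1)%g w < k).
    by rewrite -{1}(permKV p w) mem_take_perm.
  have := cvx k x y z; rewrite !mem_k xy yz /k !ltnS leq_maxr leq_maxl => /(_ isT isT isT).
  have yx : (p^-1)%g y != (p^-1)%g x.
    by rewrite (inj_eq perm_inj); apply: contraTneq xy => ->; rewrite ltnn.
  have yz' : (p^-1)%g y != (p^-1)%g z.
    by rewrite (inj_eq perm_inj); apply: contraTneq yz => ->; rewrite ltnn.
  rewrite -!(inj_eq val_inj) /= in yx yz'; lia.
move=> /[dup] /mem_take /mapP [i _ xi] xk /[dup] /mem_take /mapP [j _ zj] zk.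
rewrite {}xi {}zj /= in xyz xk zk; case/andP: xyz => xy yz.
have y_lt : y < N by apply: ltn_trans (ltn_ord (p j)).
have -> : y = val (p ((p^-1)%g (Ordinal y_lt))) by rewrite permKV.
rewrite !mem_take_perm in xk zk *.
by case: (pf (p i) (Ordinal y_lt) (p j)); rewrite ?permK //; lia.
Qed.

Lemma perm_extends_interval u s :
  [seq val (p i) | i <- enum 'I_N] = u :: s ->
  extends_interval u u s <-> peak_free (p^-1)%g.
Proof.
move=> Ep; have : uniq (u :: s).
  by rewrite -Ep map_inj_uniq ?enum_uniq //; exact: inj_comp val_inj (@perm_inj _ p).
rewrite /= => /andP[us uniq_s].
have out : {in s, forall x, (x < u) || (u < x)}.
  by move=> x xs; rewrite -neq_ltn; apply: contraNneq us => <-.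
have take_cons k : index_iota u u.+1 ++ take k s = take k.+1 (u :: s).
  by rewrite /index_iota subSnn.
have extP := extends_intervalP (leqnn u) uniq_s out.
rewrite -perm_convex_take Ep; split=> [/extP cvx [|k] | cvx].
- by move=> x y z _; rewrite in_nil.
- by rewrite -take_cons.
by apply/extP => k; rewrite take_cons.
Qed.

End OneLineNotation.

Lemma peak_free_inTm m (s : 'S_m) : 0 < m -> peak_free s <-> inTm s.
Proof.
move=> m_gt0; split=> [pf | [t [_ [dec inc]]] x y z xy yz]; last first.
  by case: (leqP y t) => yt; [left; apply: dec | right; apply: inc => //; apply: ltnW].
pose t := (s^-1 (Ordinal m_gt0))%g.
have st : s t = 0 :> nat by rewrite permKV.
have s_gt0 a : a != t -> 0 < s a.
  by move=> at'; rewrite lt0n -st (inj_eq val_inj) (inj_eq perm_inj).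
exists t; split; first exact: st.
split=> [a b ab bt | a b ta ab].
  have at' : a != t by apply: contraTneq ab => ->; rewrite -leqNgt.
  case: (ltngtP b t) bt => // [bt _|/val_inj -> _]; last by rewrite st s_gt0.
  by case: (pf a b t ab bt); rewrite // st.
have bt : b != t by apply: contraTneq ab => ->; rewrite -leqNgt.
case: (ltngtP t a) ta => // [ta _|/val_inj <- _]; last by rewrite st s_gt0.
by case: (pf t a b ta ab); rewrite // st.
Qed.

Local Open Scope ring_scope.

Lemma scale_delta_mx_eq0 (F : fieldType) n (c : F) (i j : 'I_n) :
  (c *: delta_mx i j == 0) = (c == 0).
Proof.
rewrite scaler_eq0; case: (c == 0) => //=.
by apply/negP => /eqP/matrixP/(_ i j); rewrite !mxE !eqxx /=; apply/eqP; exact: oner_neq0.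
Qed.

Lemma mxprod_delta (F : fieldType) n (q : 'I_n * 'I_n) (s : seq ('I_n * 'I_n)) :
  mxprod [seq delta_mx x.1 x.2 | x <- q :: s] =
  (path (fun x y => x.2 == y.1) q s)%:R *: delta_mx q.1 (last q s).2 :> 'M[F]_n.
Proof.
elim: s q => [|q' s IH] q; first by rewrite /mxprod /= mulmx1 scale1r.
transitivity (delta_mx q.1 q.2 *m mxprod [seq delta_mx x.1 x.2 | x <- q' :: s] :> 'M[F]_n).
  by [].
rewrite IH -scalemxAr mul_delta_mx_cond /=.
by case: (q.2 == q'.1); case: path; rewrite ?scale1r ?scale0r ?mulr0n ?mulr1n.
Qed.

Lemma foldl_mcomm0 (F : fieldType) n (s : seq 'M[F]_n) : foldl (@mcomm F n) 0 s = 0.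
Proof. by elim: s => //= A s; rewrite [mcomm 0 A]/mcomm mul0mx mulmx0 subrr. Qed.

Section ChainOfUnits.
Variables (F : fieldType) (n m : nat) (I J : 'I_m -> 'I_n).
Hypothesis chainIJ : forall u v : 'I_m, (J u == I v) = (u.+1 == v :> nat).

Lemma mxprod_chain (u : 'I_m) s :
  (mxprod [seq delta_mx (I x) (J x) | x <- u :: s] != 0 :> 'M[F]_n) =
  path (fun i j => i.+1 == j) (val u) (map val s).
Proof.
have -> : [seq delta_mx (I x) (J x) | x <- u :: s] =
    [seq delta_mx q.1 q.2 | q <- (I u, J u) :: [seq (I x, J x) | x <- s]] :> seq 'M[F]_n.
  by rewrite /= -map_comp.
rewrite mxprod_delta scale_delta_mx_eq0.
have -> : path (fun x y => x.2 == y.1) (I u, J u) [seq (I x, J x) | x <- s] =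
          path (fun i j => i.+1 == j) (val u) (map val s).
  by rewrite !path_map; apply: eq_path => x y; rewrite /= chainIJ.
by case: path; rewrite ?oner_eq0 ?eqxx.
Qed.

Lemma mcomm_chain (c : F) (lo hi x : 'I_m) :
  mcomm (c *: delta_mx (I lo) (J hi)) (delta_mx (I x) (J x)) =
  c *: ((hi.+1 == x)%:R *: delta_mx (I lo) (J x) -
        (x.+1 == lo)%:R *: delta_mx (I x) (J hi)) :> 'M[F]_n.
Proof.
by rewrite /mcomm -scalemxAl -scalemxAr !mul_delta_mx_cond !chainIJ scalerBr !scaler_nat.
Qed.

Lemma foldl_mcomm_chain (c : F) (lo hi : 'I_m) s :
  (lo <= hi)%N -> c != 0 ->
  (foldl (@mcomm F n) (c *: delta_mx (I lo) (J hi)) [seq delta_mx (I x) (J x) | x <- s]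
     != 0) = extends_interval lo hi (map val s).
Proof.
elim: s c lo hi => [|x s IH] c lo hi lohi c0 /=; first by rewrite scale_delta_mx_eq0.
rewrite mcomm_chain; case: ifP => [/eqP hix|_]; last case: ifP => [/eqP xlo|_].
- have -> : (x.+1 == lo :> nat) = false by lia.
  by rewrite /nat_of_bool mulr1n mulr0n scale0r subr0 scale1r IH //; lia.
- rewrite /nat_of_bool mulr1n mulr0n scale0r sub0r scale1r scalerN -scaleNr.
  by rewrite IH ?oppr_eq0 //; lia.
by rewrite /nat_of_bool mulr0n !scale0r subrr scaler0 foldl_mcomm0 eqxx.
Qed.

Lemma lcomm_chain (u : 'I_m) s :
  (lcomm [seq delta_mx (I x) (J x) | x <- u :: s] != 0 :> 'M[F]_n) =
  extends_interval u u (map val s).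
Proof. by rewrite /= -[delta_mx (I u) (J u)]scale1r foldl_mcomm_chain ?oner_neq0. Qed.

End ChainOfUnits.

Lemma consecutive_of_mxprod (F : fieldType) n m (I J : 'I_m -> 'I_n) :
  mxprod [seq delta_mx (I k) (J k) | k <- enum 'I_m] != 0 :> 'M[F]_n ->
  forall u v : 'I_m, u.+1 = v :> nat -> J u = I v.
Proof.
case: m I J => [|m] I J nz; first by case.
pose g k := (I (inord k), J (inord k)).
have chain : path (fun x y : 'I_n * 'I_n => x.2 == y.1) (g 0%N) [seq g k | k <- iota 1 m].
  have Eg : [seq delta_mx (I k) (J k) | k <- enum 'I_m.+1] =
            [seq delta_mx q.1 q.2 | q <- g 0%N :: [seq g k | k <- iota 1 m]] :> seq 'M[F]_n.
    rewrite -[g 0%N :: _]/(map g (iota 0 m.+1)) -val_enum_ord -!map_comp.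
    by apply: eq_map => k /=; rewrite inord_val.
  move: nz; rewrite Eg mxprod_delta scale_delta_mx_eq0.
  by case: path; rewrite /nat_of_bool ?eqxx.
move=> u v uv; have um : (u < m)%N by rewrite -ltnS uv ltn_ord.
move/(pathP (g 0%N))/(_ u): chain; rewrite size_map size_iota => /(_ um) /eqP.
rewrite -[g 0%N :: _]/(map g (iota 0 m.+1)) !(nth_map 0%N) ?size_iota ?nth_iota //.
by rewrite /g /= add1n inord_val => ->; congr I; apply: val_inj; rewrite /= uv inord_val.
Qed.

Lemma consecutive_chain n m (I J : 'I_m -> 'I_n) :
  (forall u, I u < J u)%N -> (forall u v : 'I_m, u.+1 = v :> nat -> J u = I v) ->
  forall u v : 'I_m, (J u == I v) = (u.+1 == v :> nat).
Proof.
case: m I J => [|m] I J IJ JI; first by case.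
have I_mono : {homo I : u v / (u < v)%N}.
  pose f k := val (I (inord k)).
  have f_mono : {in [pred k | k < m.+1] &, {homo f : i j / i < j}}%N.
    apply: homo_ltn_in ltn_trans _ _ => [i j _ + k|i]; rewrite !inE; first lia.
    by move=> im im1; rewrite /f -(JI (inord i) (inord i.+1)) ?IJ // !inordK.
  move=> u v uv; have := f_mono u v.
  by rewrite /f !inord_val !inE !ltn_ord => /(_ isT isT uv).
move=> u v; rewrite -val_eqE /=; case: (ltnP u.+1 m.+1) => [um|mu].
  rewrite (JI u (Ordinal um)) //; case: (ltngtP u.+1 v) => [lt|gt|eq].
  - by rewrite ltn_eqF // (I_mono (Ordinal um) v lt).
  - by rewrite gtn_eqF // (I_mono v (Ordinal um) gt).
  - by rewrite (_ : Ordinal um = v) ?eqxx //; apply: val_inj.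
have vu : (v <= u)%N by rewrite -ltnS (leq_trans (ltn_ord v) mu).
have Ivu : (I v <= I u)%N.
  by case: (ltngtP v u) vu => [/I_mono/ltnW //|//|/val_inj ->].
by rewrite !gtn_eqF //; apply: leq_ltn_trans Ivu (IJ u).
Qed.

Theorem mainTheorem2 (F : fieldType) (n m : nat) (hn : (2 <= n)%N) (hm : (0 < m)%N)
    (r : 'I_m -> 'M[F]_n)
    (hr : forall l : 'I_m, exists i j : 'I_n, (i < j)%N /\ r l = delta_mx i j)
    (hprod : mxprod [seq r k | k <- enum 'I_m] != 0)
    (sigma : 'S_m) :
  (mxprod [seq r (sigma^-1 k)%g | k <- enum 'I_m] != 0 <-> sigma = 1%g) /\
  (lcomm [seq r (sigma^-1 k)%g | k <- enum 'I_m] != 0 <-> inTm sigma).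
Proof.
have /fin_all_exists [IJ IJ_spec] : forall l, exists ij : 'I_n * 'I_n,
    (ij.1 < ij.2)%N /\ r l = delta_mx ij.1 ij.2.
  by move=> l; have [i [j ?]] := hr l; exists (i, j).
pose I l := (IJ l).1; pose J l := (IJ l).2.
have rE l : r l = delta_mx (I l) (J l) by case: (IJ_spec l).
have map_r (p : 'S_m) : [seq r (p k) | k <- enum 'I_m] =
    [seq delta_mx (I x) (J x) | x <- [seq p k | k <- enum 'I_m]].
  by elim: (enum _) => //= k ks ->; rewrite rE.
have chainIJ : forall u v : 'I_m, (J u == I v) = (u.+1 == v :> nat).
  apply: consecutive_chain => [l|]; first by case: (IJ_spec l).
  by apply: (consecutive_of_mxprod (F := F)); rewrite -(eq_map rE).
case Es : [seq (sigma^-1)%g k | k <- enum 'I_m] => [|u s].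
  by move/(congr1 size): Es; rewrite size_map size_enum_ord => m0; rewrite m0 in hm.
have Ev : [seq val ((sigma^-1)%g k) | k <- enum 'I_m] = val u :: map val s.
  by rewrite (map_comp val) Es.
rewrite !map_r Es mxprod_chain // lcomm_chain // (perm_path_succ Ev) invg_eq1.
split; first by split=> [/eqP | ->].
by rewrite -(peak_free_inTm _ hm) -[sigma]invgK; apply: perm_extends_interval.
Qed.
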